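(* Let $(\mathcal M,\mathcal H,\mathcal P,\mathcal R)$ be a right pseudo-model category, and let $\mathcal C,\mathcal F,\mathcal W\subseteq\mathcal M$ be the classes of cofibrations, fibrations and weak equivalences of $\mathcal M$. Then the morphisms of $\mathcal P$ lying in $\mathcal C$ and in $\mathcal W$, respectively, are the cofibrations and weak equivalences of a model structure on $\mathcal P$, whose fibrations are the retracts of morphisms $\mathcal R(f)$ with $f\in\mathcal F$.
   Context: A right pseudo-model category $(\mathcal M,\mathcal H,\mathcal P,\mathcal R)$ consists of a model category $\mathcal M$, a full subcategory $\mathcal H\subseteq\mathcal M$ closed under finite limits and under weak equivalences in $\mathcal M$, and a full co-reflective subcategory $\mathcal P\subseteq\mathcal H$ with right adjoint $\mathcal R:\mathcal H\to\mathcal P$ to the inclusion, such that $\mathcal R$ maps cofibrations to cofibrations and weak equivalences to weak equivalences. A ''model structure'' on a category here means the data of cofibrations, fibrations and weak equivalences satisfying the model axioms (lifting, factorization, 2-out-of-3, retracts), without requiring the category to be finitely complete and cocomplete. *)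

Set Implicit Arguments.
Unset Strict Implicit.

Record Category := {
  Ob :> Type;
  Hom : Ob -> Ob -> Type;
  idm : forall a, Hom a a;
  comp : forall a b c, Hom b c -> Hom a b -> Hom a c;
  comp_assoc : forall a b c d (f : Hom a b) (g : Hom b c) (h : Hom c d),
      comp h (comp g f) = comp (comp h g) f;
  comp_id_l : forall a b (f : Hom a b), comp (idm b) f = f;
  comp_id_r : forall a b (f : Hom a b), comp f (idm a) = f
}.

Arguments Hom {_} _ _.
Arguments idm {_} _.
Arguments comp {_ _ _ _} _ _.

Notation "g \o' f" := (comp g f) (at level 40, left associativity).

Definition MorClass (M : Category) := forall a b : M, Hom a b -> Prop.

Definition LLP {M : Category} {a b x y : M} (i : Hom a b) (p : Hom x y) : Prop :=
  forall (u : Hom a x) (v : Hom b y), p \o' u = v \o' i ->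
    exists h : Hom b x, h \o' i = u /\ p \o' h = v.

Definition IsRetract {M : Category} {a b c d : M} (f : Hom a b) (g : Hom c d) : Prop :=
  exists (s : Hom a c) (r : Hom c a) (s' : Hom b d) (r' : Hom d b),
    r \o' s = idm a /\ r' \o' s' = idm b /\
    g \o' s = s' \o' f /\ f \o' r = r' \o' g.

(* A model structure (no (co)completeness required). *)
Record IsModelStructure (M : Category) (Cof Fib W : MorClass M) : Prop := {
  ms_2of3 : forall (a b c : M) (f : Hom a b) (g : Hom b c),
      (W _ _ f -> W _ _ g -> W _ _ (g \o' f)) /\
      (W _ _ f -> W _ _ (g \o' f) -> W _ _ g) /\
      (W _ _ g -> W _ _ (g \o' f) -> W _ _ f);
  ms_retract : forall (a b c d : M) (f : Hom a b) (g : Hom c d), IsRetract f g ->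
      (Cof _ _ g -> Cof _ _ f) /\ (Fib _ _ g -> Fib _ _ f) /\ (W _ _ g -> W _ _ f);
  ms_lift_triv_fib : forall (a b x y : M) (i : Hom a b) (p : Hom x y),
      Cof _ _ i -> Fib _ _ p -> W _ _ p -> LLP i p;
  ms_lift_triv_cof : forall (a b x y : M) (i : Hom a b) (p : Hom x y),
      Cof _ _ i -> W _ _ i -> Fib _ _ p -> LLP i p;
  ms_fact_triv_cof : forall (a b : M) (f : Hom a b),
      exists (c : M) (i : Hom a c) (p : Hom c b),
        f = p \o' i /\ Cof _ _ i /\ W _ _ i /\ Fib _ _ p;
  ms_fact_triv_fib : forall (a b : M) (f : Hom a b),
      exists (c : M) (i : Hom a c) (p : Hom c b),
        f = p \o' i /\ Cof _ _ i /\ Fib _ _ p /\ W _ _ p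
}.

Definition IsTerminal {M : Category} (t : M) : Prop :=
  forall x : M, exists! u : Hom x t, True.
Definition IsInitial {M : Category} (t : M) : Prop :=
  forall x : M, exists! u : Hom t x, True.

Definition IsPullback {M : Category} {x y z q : M}
  (f : Hom x z) (g : Hom y z) (p1 : Hom q x) (p2 : Hom q y) : Prop :=
  f \o' p1 = g \o' p2 /\
  forall (w : M) (q1 : Hom w x) (q2 : Hom w y), f \o' q1 = g \o' q2 ->
    exists! u : Hom w q, p1 \o' u = q1 /\ p2 \o' u = q2.

Definition IsPushout {M : Category} {x y z q : M}
  (f : Hom z x) (g : Hom z y) (i1 : Hom x q) (i2 : Hom y q) : Prop :=
  i1 \o' f = i2 \o' g /\
  forall (w : M) (q1 : Hom x w) (q2 : Hom y w), q1 \o' f = q2 \o' g ->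
    exists! u : Hom q w, u \o' i1 = q1 /\ u \o' i2 = q2.

Definition FinitelyComplete (M : Category) : Prop :=
  (exists t : M, IsTerminal t) /\
  forall (x y z : M) (f : Hom x z) (g : Hom y z),
    exists (q : M) (p1 : Hom q x) (p2 : Hom q y), IsPullback f g p1 p2.

Definition FinitelyCocomplete (M : Category) : Prop :=
  (exists t : M, IsInitial t) /\
  forall (x y z : M) (f : Hom z x) (g : Hom z y),
    exists (q : M) (i1 : Hom x q) (i2 : Hom y q), IsPushout f g i1 i2.

Definition IsModelCategory (M : Category) (Cof Fib W : MorClass M) : Prop :=
  IsModelStructure Cof Fib W /\ FinitelyComplete M /\ FinitelyCocomplete M.

Section FullSub.
Variables (M : Category) (S : M -> Prop).
Definition FullSub : Category :=
  {| Ob := { x : M | S x };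
     Hom := fun a b => @Hom M (proj1_sig a) (proj1_sig b);
     idm := fun a => idm (proj1_sig a);
     comp := fun a b c g f => g \o' f;
     comp_assoc := fun a b c d f g h => comp_assoc f g h;
     comp_id_l := fun a b f => comp_id_l f;
     comp_id_r := fun a b f => comp_id_r f |}.
End FullSub.

(* H and P are full subcategories
   given by predicates on objects.  The right adjoint R : H -> P of the
   inclusion P -> H is encoded by its object map RO, its morphism map RH and
   its counit eps (meaningful on objects of H): RO x lies in P, eps is natural,
   and eps_x : RO x -> x is couniversal among maps from objects of P. *)
Definition IsRightPseudoModelCategory (M : Category) (Cof Fib W : MorClass M)
  (H P : M -> Prop) (RO : M -> M)
  (RH : forall x y : M, Hom x y -> Hom (RO x) (RO y))
  (eps : forall x : M, Hom (RO x) x) : Prop :=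
  IsModelCategory Cof Fib W /\
  (forall t : M, IsTerminal t -> H t) /\
  (forall (x y z q : M) (f : Hom x z) (g : Hom y z) (p1 : Hom q x) (p2 : Hom q y),
      H x -> H y -> H z -> IsPullback f g p1 p2 -> H q) /\
  (forall (a b : M) (f : Hom a b), W _ _ f -> (H a <-> H b)) /\
  (forall x : M, P x -> H x) /\
  (forall x : M, H x -> P (RO x)) /\
  (forall (x y : M) (f : Hom x y), H x -> H y -> eps y \o' RH _ _ f = f \o' eps x) /\
  (forall (x y : M) (g : Hom y x), H x -> P y ->
      exists! h : Hom y (RO x), eps x \o' h = g) /\
  (forall (x y : M) (f : Hom x y), H x -> H y -> Cof _ _ f -> Cof _ _ (RH _ _ f)) /\
  (forall (x y : M) (f : Hom x y), H x -> H y -> W _ _ f -> W _ _ (RH _ _ f)).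

(* The adjunction between the inclusion P -> H and R transposes lifting
   problems: a map between objects of P lifts against R(g) as soon as it lifts
   against g in M.  Cofibrations and trivial cofibrations between objects of P
   therefore lift against every R(g) with g a fibration, hence against its
   retracts.  Factorizations are produced in M and pulled back to P by
   applying R: the middle object lies in H because H is closed under weak
   equivalences, and the counit is invertible on P.  The remaining lifting
   property (cofibrations against trivial fibrations of P) follows from the
   retract argument, after factoring a trivial fibration of P through a
   trivial cofibration of P followed by a retract of some R(g') with g' a
   trivial fibration of M. *)

Lemma llp_retract {M : Category} {a b x y c d : M}
  {i : Hom a b} {f : Hom x y} {g : Hom c d} :
  IsRetract f g -> LLP i g -> LLP i f.
Proof.
  intros [s [r [s' [r' [Hrs [Hrs' [Hgs Hfr]]]]]]] Hlift u v Hsq.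
  destruct (Hlift (s \o' u) (s' \o' v)) as [h [Hhi Hgh]].
  { rewrite comp_assoc, Hgs, <- comp_assoc, Hsq, comp_assoc. reflexivity. }
  exists (r \o' h). split.
  - rewrite <- comp_assoc, Hhi, comp_assoc, Hrs, comp_id_l. reflexivity.
  - rewrite comp_assoc, Hfr, <- comp_assoc, Hgh, comp_assoc, Hrs', comp_id_l.
    reflexivity.
Qed.

Lemma retract_trans {M : Category} {a b c d e e' : M}
  {f : Hom a b} {g : Hom c d} {k : Hom e e'} :
  IsRetract f g -> IsRetract g k -> IsRetract f k.
Proof.
  intros [s1 [r1 [s1' [r1' [A1 [A2 [A3 A4]]]]]]]
         [s2 [r2 [s2' [r2' [B1 [B2 [B3 B4]]]]]]].
  exists (s2 \o' s1), (r1 \o' r2), (s2' \o' s1'), (r1' \o' r2').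
  repeat split.
  - rewrite <- comp_assoc, (comp_assoc s1 s2 r2), B1, comp_id_l. exact A1.
  - rewrite <- comp_assoc, (comp_assoc s1' s2' r2'), B2, comp_id_l. exact A2.
  - rewrite comp_assoc, B3, <- comp_assoc, A3, comp_assoc. reflexivity.
  - rewrite comp_assoc, A4, <- comp_assoc, B4, comp_assoc. reflexivity.
Qed.

Lemma retract_comp_iso_r {M : Category} {a c d : M}
  (g : Hom c d) {s : Hom a c} {r : Hom c a} :
  r \o' s = idm a -> s \o' r = idm c -> IsRetract (g \o' s) g.
Proof.
  intros Hrs Hsr. exists s, r, (idm d), (idm d). repeat split.
  - exact Hrs.
  - apply comp_id_l.
  - rewrite comp_id_l. reflexivity.
  - rewrite <- comp_assoc, Hsr, comp_id_r, comp_id_l. reflexivity.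
Qed.

Lemma retract_comp_iso_l {M : Category} {b c d : M}
  (g : Hom c d) {r' : Hom d b} {s' : Hom b d} :
  r' \o' s' = idm b -> s' \o' r' = idm d -> IsRetract (r' \o' g) g.
Proof.
  intros Hrs Hsr. exists (idm c), (idm c), s', r'. repeat split.
  - apply comp_id_l.
  - exact Hrs.
  - rewrite comp_assoc, Hsr, comp_id_l, comp_id_r. reflexivity.
  - apply comp_id_r.
Qed.

Lemma llp_factor_retract {M : Category} {x y c : M}
  {p : Hom x y} {j : Hom x c} {q : Hom c y} :
  p = q \o' j -> LLP j p -> IsRetract p q.
Proof.
  intros Hpqj Hlift.
  destruct (Hlift (idm x) q) as [h [Hhj Hph]].
  { rewrite comp_id_r. exact Hpqj. }
  exists j, h, (idm y), (idm y). repeat split.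
  - exact Hhj.
  - apply comp_id_l.
  - rewrite comp_id_l. symmetry. exact Hpqj.
  - rewrite comp_id_l. exact Hph.
Qed.

Section RightPseudoModelCategory.

Variables (M : Category) (Cof Fib W : MorClass M) (H P : M -> Prop)
  (RO : M -> M) (RH : forall x y : M, Hom x y -> Hom (RO x) (RO y))
  (eps : forall x : M, Hom (RO x) x).

Hypothesis model : IsModelStructure Cof Fib W.
Hypothesis H_weq : forall {a b : M} {f : Hom a b}, W _ _ f -> (H a <-> H b).
Hypothesis H_of_P : forall {x : M}, P x -> H x.
Hypothesis P_RO : forall {x : M}, H x -> P (RO x).
Hypothesis eps_natural : forall {x y : M} (f : Hom x y),
  H x -> H y -> eps y \o' RH _ _ f = f \o' eps x.
Hypothesis eps_couniversal : forall {x y : M} (g : Hom y x),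
  H x -> P y -> exists! h : Hom y (RO x), eps x \o' h = g.
Hypothesis RH_cof : forall {x y : M} {f : Hom x y},
  H x -> H y -> Cof _ _ f -> Cof _ _ (RH _ _ f).
Hypothesis RH_weq : forall {x y : M} {f : Hom x y},
  H x -> H y -> W _ _ f -> W _ _ (RH _ _ f).

Definition PFib {x y : M} (f : Hom x y) : Prop :=
  exists (x0 y0 : M) (g : Hom x0 y0),
    H x0 /\ H y0 /\ Fib _ _ g /\ IsRetract f (RH _ _ g).

Lemma eps_mono {x y : M} (g1 g2 : Hom y (RO x)) :
  H x -> P y -> eps x \o' g1 = eps x \o' g2 -> g1 = g2.
Proof.
  intros Hx Py Heq.
  destruct (eps_couniversal (eps x \o' g1) Hx Py) as [h [_ Huniq]].
  transitivity h; [symmetry|]; apply Huniq; [reflexivity | symmetry; exact Heq].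
Qed.

Lemma eps_iso {x : M} : P x ->
  exists h : Hom x (RO x), eps x \o' h = idm x /\ h \o' eps x = idm (RO x).
Proof.
  intros Px. pose proof (H_of_P Px) as Hx.
  destruct (eps_couniversal (idm x) Hx Px) as [h [Hepsh _]].
  exists h. split; [exact Hepsh|].
  apply eps_mono; [exact Hx | exact (P_RO Hx)|].
  rewrite comp_assoc, Hepsh, comp_id_l, comp_id_r. reflexivity.
Qed.

Lemma llp_RH {a b x y : M} (i : Hom a b) (g : Hom x y) :
  P a -> P b -> H x -> H y -> LLP i g -> LLP i (RH _ _ g).
Proof.
  intros Pa Pb Hx Hy Hlift u v Hsq.
  destruct (Hlift (eps x \o' u) (eps y \o' v)) as [h' [Hh'i Hgh']].
  { rewrite comp_assoc, <- eps_natural by assumption.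
    rewrite <- comp_assoc, Hsq, comp_assoc. reflexivity. }
  destruct (eps_couniversal h' Hx Pb) as [h [Hepsh _]].
  exists h. split.
  - apply eps_mono; [exact Hx | exact Pa|].
    rewrite comp_assoc, Hepsh. exact Hh'i.
  - apply eps_mono; [exact Hy | exact Pb|].
    rewrite comp_assoc, eps_natural by assumption.
    rewrite <- comp_assoc, Hepsh. exact Hgh'.
Qed.

Lemma factor_through_RO {a b c : M} {f : Hom a b} {i : Hom a c} {p : Hom c b} :
  P a -> P b -> H c -> f = p \o' i ->
  exists (i' : Hom a (RO c)) (q : Hom (RO c) b),
    f = q \o' i' /\ IsRetract i' (RH _ _ i) /\ IsRetract q (RH _ _ p).
Proof.
  intros Pa Pb Hc Hf.
  destruct (eps_iso Pa) as [ha [Ha1 Ha2]].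
  destruct (eps_iso Pb) as [hb [Hb1 Hb2]].
  exists (RH _ _ i \o' ha), (eps b \o' RH _ _ p). repeat split.
  - rewrite <- comp_assoc, comp_assoc, eps_natural by auto.
    rewrite <- comp_assoc, (comp_assoc ha), eps_natural by auto.
    rewrite <- comp_assoc, Ha1, comp_id_r. exact Hf.
  - exact (retract_comp_iso_r (RH _ _ i) Ha1 Ha2).
  - exact (retract_comp_iso_l (RH _ _ p) Hb1 Hb2).
Qed.

Lemma PFib_retract {a b c d : M} {f : Hom a b} {g : Hom c d} :
  IsRetract f g -> PFib g -> PFib f.
Proof.
  intros Hfg [x0 [y0 [g0 [Hx0 [Hy0 [Fg0 Hg]]]]]].
  exists x0, y0, g0. repeat split; try assumption.
  exact (retract_trans Hfg Hg).
Qed.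

Lemma llp_trivial_cof_PFib {a b x y : M} {i : Hom a b} {p : Hom x y} :
  P a -> P b -> Cof _ _ i -> W _ _ i -> PFib p -> LLP i p.
Proof.
  intros Pa Pb Ci Wi [x0 [y0 [g0 [Hx0 [Hy0 [Fg0 Hp]]]]]].
  apply (llp_retract Hp), llp_RH; try assumption.
  exact (ms_lift_triv_cof model Ci Wi Fg0).
Qed.

Lemma llp_cof_trivial_PFib {a b x y : M} {i : Hom a b} {p : Hom x y} :
  P a -> P b -> P x -> P y -> Cof _ _ i -> PFib p -> W _ _ p -> LLP i p.
Proof.
  intros Pa Pb Px Py Ci Fp Wp.
  destruct (ms_fact_triv_fib model p) as [c [j [g [Hp [Cj [Fg Wg]]]]]].
  assert (Hc : H c) by exact (proj2 (H_weq Wg) (H_of_P Py)).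
  destruct (factor_through_RO Px Py Hc Hp) as [j' [q [Hp' [Rj Rq]]]].
  assert (Wq : W _ _ q)
    by exact (proj2 (proj2 (ms_retract model Rq)) (RH_weq Hc (H_of_P Py) Wg)).
  assert (Cj' : Cof _ _ j')
    by exact (proj1 (ms_retract model Rj) (RH_cof (H_of_P Px) Hc Cj)).
  assert (Wj' : W _ _ j').
  { apply (proj2 (proj2 (ms_2of3 model j' q))); [exact Wq|].
    rewrite <- Hp'. exact Wp. }
  assert (Hpq : IsRetract p q).
  { apply (llp_factor_retract Hp'), llp_trivial_cof_PFib; auto. }
  apply (llp_retract Hpq), (llp_retract Rq), llp_RH; auto.
  exact (ms_lift_triv_fib model Ci Fg Wg).
Qed.

Lemma fact_trivial_cof_PFib {a b : M} (f : Hom a b) : P a -> P b ->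
  exists (c : M) (i : Hom a c) (p : Hom c b),
    P c /\ f = p \o' i /\ Cof _ _ i /\ W _ _ i /\ PFib p.
Proof.
  intros Pa Pb.
  destruct (ms_fact_triv_cof model f) as [c [i [p [Hf [Ci [Wi Fp]]]]]].
  assert (Hc : H c) by exact (proj1 (H_weq Wi) (H_of_P Pa)).
  destruct (factor_through_RO Pa Pb Hc Hf) as [i' [q [Hf' [Ri Rq]]]].
  exists (RO c), i', q. repeat split.
  - exact (P_RO Hc).
  - exact Hf'.
  - exact (proj1 (ms_retract model Ri) (RH_cof (H_of_P Pa) Hc Ci)).
  - exact (proj2 (proj2 (ms_retract model Ri)) (RH_weq (H_of_P Pa) Hc Wi)).
  - exists c, b, p. repeat split; auto.
Qed.

Lemma fact_cof_trivial_PFib {a b : M} (f : Hom a b) : P a -> P b ->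
  exists (c : M) (i : Hom a c) (p : Hom c b),
    P c /\ f = p \o' i /\ Cof _ _ i /\ PFib p /\ W _ _ p.
Proof.
  intros Pa Pb.
  destruct (ms_fact_triv_fib model f) as [c [i [p [Hf [Ci [Fp Wp]]]]]].
  assert (Hc : H c) by exact (proj2 (H_weq Wp) (H_of_P Pb)).
  destruct (factor_through_RO Pa Pb Hc Hf) as [i' [q [Hf' [Ri Rq]]]].
  exists (RO c), i', q. repeat split.
  - exact (P_RO Hc).
  - exact Hf'.
  - exact (proj1 (ms_retract model Ri) (RH_cof (H_of_P Pa) Hc Ci)).
  - exists c, b, p. repeat split; auto.
  - exact (proj2 (proj2 (ms_retract model Rq)) (RH_weq Hc (H_of_P Pb) Wp)).
Qed.

Lemma model_structure_on_P :
  @IsModelStructure (FullSub P)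
    (fun a b f => Cof (proj1_sig a) (proj1_sig b) f)
    (fun a b f => PFib f)
    (fun a b f => W (proj1_sig a) (proj1_sig b) f).
Proof.
  constructor.
  - intros [a Pa] [b Pb] [c Pc] f g. exact (ms_2of3 model f g).
  - intros [a Pa] [b Pb] [c Pc] [d Pd] f g Hfg.
    destruct (ms_retract model Hfg) as [Rcof [_ Rweq]].
    split; [exact Rcof | split; [exact (PFib_retract Hfg) | exact Rweq]].
  - intros [a Pa] [b Pb] [x Px] [y Py] i p.
    exact (llp_cof_trivial_PFib Pa Pb Px Py).
  - intros [a Pa] [b Pb] [x Px] [y Py] i p.
    exact (llp_trivial_cof_PFib Pa Pb).
  - intros [a Pa] [b Pb] f.
    destruct (fact_trivial_cof_PFib f Pa Pb) as [c [i [p [Pc Hf]]]].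
    exists (exist _ c Pc), i, p. exact Hf.
  - intros [a Pa] [b Pb] f.
    destruct (fact_cof_trivial_PFib f Pa Pb) as [c [i [p [Pc Hf]]]].
    exists (exist _ c Pc), i, p. exact Hf.
Qed.

End RightPseudoModelCategory.

Theorem mainTheorem2 (M : Category) (Cof Fib W : MorClass M)
  (H P : M -> Prop) (RO : M -> M)
  (RH : forall x y : M, Hom x y -> Hom (RO x) (RO y))
  (eps : forall x : M, Hom (RO x) x) :
  IsRightPseudoModelCategory Cof Fib W H P RH eps ->
  @IsModelStructure (FullSub P)
    (fun a b f => Cof (proj1_sig a) (proj1_sig b) f)
    (fun a b f => exists (x y : M) (g : Hom x y),
        H x /\ H y /\ Fib _ _ g /\ IsRetract (M := M) f (RH _ _ g))
    (fun a b f => W (proj1_sig a) (proj1_sig b) f).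
Proof.
  intros [[model _] [_ [_ [H_weq [H_of_P [P_RO [eps_natural [eps_couniversal
           [RH_cof RH_weq]]]]]]]]].
  eapply model_structure_on_P; eassumption.
Qed.
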